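(* Let $W$ be an irreducible finite Weyl group with (connected) Dynkin diagram $\Gamma$. For any nested set $\mathcal{N}$ on $\Gamma$, the element $w(\mathcal{N})=\prod_{J\in\mathcal{N}}w_0(J)$, with the product taken in a monotonic order of $\mathcal{N}$, is separable.
   Context: $\Phi$ is a finite crystallographic root system with simple roots $\Delta$, positive roots $\Phi^+$, Weyl group $W=W(\Phi)$; $I_\Phi(w)=\{\beta\in\Phi^+:w\beta\in-\Phi^+\}$. For $J\subseteq\Delta$, $W_J$ is the parabolic subgroup generated by $\{s_\alpha:\alpha\in J\}$ and $w_0(J)$ its longest element. Root poset: $\beta\leq\beta'$ iff $\beta'-\beta$ is a nonnegative combination of simple roots. $\Phi_J$ is the set of roots in the span of $J$; for a subsystem $\Phi'=\Phi\cap V$, $w|_{\Phi'}\in W(\Phi')$ is the element with inversion set $I_\Phi(w)\cap V$. $w$ is separable if (S1) $\Phi$ has type $A_1$; or (S2) $\Phi=\bigoplus\Phi_i$ is reducible and each $w|_{\Phi_i}$ is separable; or (S3) $\Phi$ is irreducible and some $\alpha_i\in\Delta$ has $w|_{\Phi_{\Delta\setminus\{\alpha_i\}}}$ separable and either $\{\beta\in\Phi^+:\beta\geq\alpha_i\}\subseteq I_\Phi(w)$ or this set is disjoint from $I_\Phi(w)$. The Dynkin diagram $\Gamma$ is the simple graph on $\Delta$ with an edge between $\alpha,\alpha'$ whenever $s_\alpha,s_{\alpha'}$ do not commute. A nested set on $\Gamma$ is a collection $\mathcal{N}$ of vertex subsets satisfying (N1) each $J\in\mathcal{N}$ induces a connected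 subgraph; (N2) any two elements are nested or disjoint; (N3) the union of any $k\geq2$ pairwise disjoint elements induces a disconnected subgraph. A total order on $\mathcal{N}$ is monotonic if $J$ comes after $I$ whenever $J\subseteq I$. *)

(* Root systems are encoded by their Cartan matrix; roots are
   integer vectors in simple-root coordinates. *)
From mathcomp Require Import all_boot all_order all_algebra.
Set Implicit Arguments. Unset Strict Implicit. Unset Printing Implicit Defensive.
Import Order.TTheory GRing.Theory Num.Theory.
Local Open Scope ring_scope.

Section RootSystem.
Variables (n : nat) (A : 'M[int]_n).
(* Convention: A i j = <alpha_i^vee, alpha_j>, so s_i(alpha_j) = alpha_j - A i j alpha_i. *)

Definition cartan_finite : Prop :=
  [/\ (forall i, A i i = 2),
      (forall i j, i != j -> A i j <= 0),
      (forall i j, A i j = 0 <-> A j i = 0)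
    & exists d : 'I_n -> int,
        [/\ (forall i, 0 < d i),
            (forall i j, d i * A i j = d j * A j i)
          & (forall x : 'rV[int]_n, x != 0 ->
               0 < \sum_i \sum_j x ord0 i * d i * A i j * x ord0 j)]].

Definition sroot (i : 'I_n) : 'rV[int]_n := delta_mx ord0 i.

Definition refl (i : 'I_n) (v : 'rV[int]_n) : 'rV[int]_n :=
  v - (\sum_j A i j * v ord0 j) *: sroot i.

(* a word [:: i1; ...; ik] represents s_{i1} s_{i2} ... s_{ik} *)
Definition act (w : seq 'I_n) (v : 'rV[int]_n) : 'rV[int]_n :=
  foldr refl v w.

Definition same_elt (u v : seq 'I_n) : Prop := forall x, act u x = act v x.

(* length(u) <= length(v) in W *)
Definition length_le (u v : seq 'I_n) : Prop :=
  forall v', same_elt v' v -> exists2 u', same_elt u' u & (size u' <= size v')%N.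

Definition in_parabolic (J : {set 'I_n}) (w : seq 'I_n) : bool := all (mem J) w.

Definition is_longest (J : {set 'I_n}) (u : seq 'I_n) : Prop :=
  in_parabolic J u /\ forall v, in_parabolic J v -> length_le v u.

Definition is_root (b : 'rV[int]_n) : Prop :=
  exists w i, b = act w (sroot i).

Definition nonneg (v : 'rV[int]_n) : Prop := forall j, 0 <= v ord0 j.

Definition pos_root (b : 'rV[int]_n) : Prop := is_root b /\ nonneg b.

Definition inv_set (w : seq 'I_n) (b : 'rV[int]_n) : Prop :=
  pos_root b /\ pos_root (- act w b).

Definition in_span (J : {set 'I_n}) (v : 'rV[int]_n) : Prop :=
  forall j, j \notin J -> v ord0 j = 0.

Definition root_le (b b' : 'rV[int]_n) : Prop := nonneg (b' - b).

(* Dynkin diagram: edge iff s_i, s_j do not commute *)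
Definition dynkin_edge (i j : 'I_n) : Prop :=
  ~ (forall v, act [:: i; j] v = act [:: j; i] v).

Definition connected (J : {set 'I_n}) : Prop :=
  (exists i, i \in J) /\
  forall S : {set 'I_n}, S \subset J -> (exists i, i \in S) ->
    (forall x y, x \in S -> y \in J -> dynkin_edge x y -> y \in S) -> S = J.

(* Separability of w, where I = I_Phi(w); sepJ I J means that w|_{Phi_J}
   (whose inversion set is I ∩ span J) is separable in Phi_J. *)
Inductive sepJ (I : 'rV[int]_n -> Prop) : {set 'I_n} -> Prop :=
| sep_S1 (J : {set 'I_n}) : #|J| = 1%N -> sepJ I J
| sep_S2 (J : {set 'I_n}) (P : {set {set 'I_n}}) :
    partition P J -> (1 < #|P|)%N ->
    (forall K1 K2 x y, K1 \in P -> K2 \in P -> K1 != K2 ->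
        x \in K1 -> y \in K2 -> ~ dynkin_edge x y) ->
    (forall K, K \in P -> sepJ I K) -> sepJ I J
| sep_S3 (J : {set 'I_n}) (i : 'I_n) : connected J -> i \in J -> sepJ I (J :\ i) ->
    ((forall b, pos_root b -> in_span J b -> root_le (sroot i) b -> I b) \/
     (forall b, pos_root b -> in_span J b -> root_le (sroot i) b -> ~ I b)) ->
    sepJ I J.

Definition separable (w : seq 'I_n) : Prop := sepJ (inv_set w) setT.

Definition nested (N : {set {set 'I_n}}) : Prop :=
  [/\ (forall J, J \in N -> connected J),
      (forall I J, I \in N -> J \in N -> [|| I \subset J, J \subset I | [disjoint I & J]])
    & (forall S : {set {set 'I_n}}, S \subset N -> (2 <= #|S|)%N ->
         (forall I J, I \in S -> J \in S -> I != J -> [disjoint I & J]) ->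
         ~ connected (\bigcup_(J in S) J))].

Definition monotonic_order (N : {set {set 'I_n}}) (s : seq {set 'I_n}) : Prop :=
  perm_eq s (enum N) /\
  forall I J, I \in N -> J \in N -> J \proper I -> (index I s < index J s)%N.

End RootSystem.

(* For J connected, let w_{<J} (resp. w_{<=J}) be the ordered product of the
   w_0(K), K in N, with K a proper subset of J (resp. K a subset of J).  We show
   by induction on |J| that w_{<J} restricted to Phi_J is separable.  The
   nested-set axioms give a vertex i of J lying in no proper K in N below J, so
   w_{<J} fixes the alpha_i-coordinate and inverts no root >= alpha_i (S3).  A
   member K of N below J avoiding i is connected, hence lies in one component C
   of J - {i} or is orthogonal to it; so on Phi_C, w_{<J} acts as w_{<=C}, and
   separability on J - {i} follows component by component (S2).  Finally
   w_{<=J} = w_0(J) w_{<J} when J is in N, and left multiplication by w_0(J)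
   complements the inversion set inside Phi_J, which preserves separability.
   The root-system input is that every root is nonnegative or nonpositive,
   proved through the invariants B(v,v) = B(alpha_k,alpha_k) and integrality
   of the coroot of v, and that w_0(J) sends Phi_J^+ to negative roots, by the
   exchange condition. *)

From mathcomp Require Import all_boot all_order all_algebra.
From mathcomp Require Import zify ring.
Set Implicit Arguments. Unset Strict Implicit. Unset Printing Implicit Defensive.
Import Order.TTheory GRing.Theory Num.Theory.
Local Open Scope ring_scope.

Lemma no_descent (T : Type) (f : T -> nat) (P : T -> Prop) :
  (forall x, P x -> exists2 y, P y & (f y < f x)%N) -> forall x, ~ P x.
Proof.
move=> step x; elim: {x}(f x).+1 {-2}x (ltnSn (f x)) => // m IH x fx Px.
have [y Py fy] := step x Px; exact: IH y (leq_trans fy fx) Py.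
Qed.

Lemma partition_subset (T : finType) (P : {set {set T}}) (D K : {set T}) :
  partition P D -> K \in P -> K \subset D.
Proof. by case/and3P => /eqP <- _ _; apply: bigcup_sup. Qed.

Lemma partition_card_le1 (T : finType) (P : {set {set T}}) (D : {set T}) x :
  partition P D -> (#|P| <= 1)%N -> x \in D -> D \in P.
Proof.
case/and3P => /eqP <- _ _ P_le1 /bigcupP [C CP _].
have -> : P = [set C] by apply/eqP; rewrite eq_sym eqEcard sub1set CP cards1.
by rewrite /cover big_set1 set11.
Qed.

Lemma filter_subset_head (T : finType) (t : seq {set T}) (J : {set T}) :
  uniq t -> J \in t -> {in t, forall K : {set T}, K \proper J -> index J t < index K t}%N ->
  [seq K : {set T} <- t | K \subset J] = J :: [seq K : {set T} <- t | K \proper J].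
Proof.
move=> t_uniq Jt; move: t_uniq; case/splitPr: Jt => t1 t2.
rewrite cat_uniq /= => /and3P [_ /norP [Jt1 _] /andP [Jt2 _]] after_J.
have t1_notsub : {in t1, forall K : {set T}, K \subset J = false}.
  move=> K Kt1; apply/negbTE/negP => KJ.
  have KJ' : K \proper J by rewrite properEneq KJ andbT; apply: contraNneq Jt1 => <-.
  have := after_J K; rewrite mem_cat Kt1 => /(_ isT KJ').
  by rewrite !index_cat Kt1 (negbTE Jt1) /= eqxx addn0 ltnNge ltnW ?index_mem.
have t1_notproper : {in t1, forall K : {set T}, K \proper J = false}.
  by move=> K /t1_notsub KJ; rewrite properEneq KJ andbF.
rewrite !filter_cat /= subxx properxx (eq_in_filter t1_notsub) (eq_in_filter t1_notproper).
rewrite filter_pred0 /=; congr (_ :: _); apply: eq_in_filter => K Kt2.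
by rewrite properEneq; have -> : K != J by apply: contraNneq Jt2 => <-.
Qed.

Section Reflections.
Variables (n : nat) (A : 'M[int]_n).

Definition pairing (i : 'I_n) (v : 'rV[int]_n) : int := \sum_j A i j * v ord0 j.

Lemma srootE (i j : 'I_n) : sroot i ord0 j = (i == j)%:R.
Proof. by rewrite /sroot mxE eqxx /= eq_sym. Qed.

Lemma pairingD i u v : pairing i (u + v) = pairing i u + pairing i v.
Proof. by rewrite /pairing -big_split; apply: eq_bigr => j _; rewrite mxE mulrDr. Qed.

Lemma pairingZ i a v : pairing i (a *: v) = a * pairing i v.
Proof. by rewrite /pairing mulr_sumr; apply: eq_bigr => j _; rewrite mxE; ring. Qed.

Lemma pairingN i v : pairing i (- v) = - pairing i v.
Proof. by rewrite -scaleN1r pairingZ mulN1r. Qed.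

Lemma pairing_sroot i j : pairing i (sroot j) = A i j.
Proof.
rewrite /pairing (bigD1 j) //= srootE eqxx mulr1 big1 ?addr0 // => k /negbTE kj.
by rewrite srootE eq_sym kj mulr0.
Qed.

Lemma reflE i v : refl A i v = v - pairing i v *: sroot i.
Proof. by []. Qed.

Lemma refl_coord i v j :
  refl A i v ord0 j = if j == i then v ord0 j - pairing i v else v ord0 j.
Proof. by rewrite reflE !mxE /=; case: eqP; rewrite ?mulr1 ?mulr0 ?subr0. Qed.

Lemma reflD i u v : refl A i (u + v) = refl A i u + refl A i v.
Proof. by rewrite !reflE pairingD scalerDl; apply/rowP => j; rewrite !mxE; ring. Qed.

Lemma reflZ i a v : refl A i (a *: v) = a *: refl A i v.
Proof. by rewrite !reflE pairingZ; apply/rowP => j; rewrite !mxE; ring. Qed.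

Lemma reflN i v : refl A i (- v) = - refl A i v.
Proof. by rewrite -!scaleN1r reflZ. Qed.

Lemma actD w u v : act A w (u + v) = act A w u + act A w v.
Proof. by elim: w => //= i w ->; rewrite reflD. Qed.

Lemma actZ w a v : act A w (a *: v) = a *: act A w v.
Proof. by elim: w => //= i w ->; rewrite reflZ. Qed.

Lemma actN w v : act A w (- v) = - act A w v.
Proof. by rewrite -!scaleN1r actZ. Qed.

Lemma act0 w : act A w 0 = 0.
Proof. by rewrite -(scale0r 0) actZ !scale0r. Qed.

Lemma act_sum w (I : finType) (P : pred I) (F : I -> 'rV[int]_n) :
  act A w (\sum_(i | P i) F i) = \sum_(i | P i) act A w (F i).
Proof. exact: (big_morph _ (actD w) (act0 w)). Qed.

Lemma act_cat u v x : act A (u ++ v) x = act A u (act A v x).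
Proof. by rewrite /act foldr_cat. Qed.

Lemma act_rcons u i x : act A (rcons u i) x = act A u (refl A i x).
Proof. by rewrite -cats1 act_cat. Qed.

Lemma act_coord_notin w v i : i \notin w -> act A w v ord0 i = v ord0 i.
Proof.
elim: w => //= j w IH; rewrite inE negb_or => /andP [ij iw].
by rewrite refl_coord (negbTE ij) IH.
Qed.

Lemma act_in_span (J : {set 'I_n}) w v :
  all (mem J) w -> in_span J v -> in_span J (act A w v).
Proof.
elim: w => //= i w IH /andP [iJ wJ] vJ j jJ.
have ji : j != i by apply: contraNneq jJ => ->.
by rewrite refl_coord (negbTE ji) IH.
Qed.

Lemma act_orthogonal_id (C : {set 'I_n}) w v :
  (forall j l, j \in w -> l \in C -> A j l = 0) -> in_span C v -> act A w v = v.
Proof.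
elim: w => //= j w IH wC vC.
have -> : act A w v = v by apply: IH => // k l kw; apply: wC; rewrite inE kw orbT.
rewrite reflE /pairing big1 ?scale0r ?subr0 // => l _.
by case: (boolP (l \in C)) => lC; [rewrite wC ?inE ?eqxx ?mul0r | rewrite vC ?mulr0].
Qed.

Lemma in_spanN (J : {set 'I_n}) v : in_span J v -> in_span J (- v).
Proof. by move=> vJ j jJ; rewrite mxE vJ ?oppr0. Qed.

Lemma in_span_subset (J K : {set 'I_n}) v : K \subset J -> in_span K v -> in_span J v.
Proof. by move=> KJ vK j jJ; apply: vK; apply: contra jJ; apply: subsetP. Qed.

Lemma in_span_sroot_sum (J : {set 'I_n}) v :
  in_span J v -> v = \sum_(i in J) v ord0 i *: sroot i.
Proof.
move=> vJ; apply/rowP => j; rewrite summxE.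
case: (boolP (j \in J)) => jJ; last first.
  rewrite vJ // big1 // => i iJ; rewrite mxE srootE.
  by case: eqP => [ij|_]; [rewrite -ij iJ in jJ | rewrite mulr0].
rewrite (bigD1 j) //= mxE srootE eqxx mulr1 big1 ?addr0 // => i /andP [_ ij].
by rewrite mxE srootE (negbTE ij) mulr0.
Qed.

Lemma nonnegP (v : 'rV[int]_n) : reflect (nonneg v) [forall j, 0 <= v ord0 j].
Proof. exact: forallP. Qed.

End Reflections.

Section Separability.
Variables (n : nat) (A : 'M[int]_n).

Lemma eq_sepJ I I' J : sepJ A I J ->
  (forall b, pos_root A b -> in_span J b -> (I b <-> I' b)) -> sepJ A I' J.
Proof.
move=> sepI; elim: sepI I' => {J} [J J1 | J P P_part P2 P_sep _ IH | J i J_conn iJ _ IH I_side]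
  I' II'.
- exact: sep_S1.
- apply: (sep_S2 P_part P2 P_sep) => K KP; apply: IH => // b b_pos bK.
  exact/II'/(in_span_subset (partition_subset P_part KP)).
- apply: (sep_S3 J_conn iJ).
    by apply: IH => b b_pos bJ; apply/II'/(in_span_subset (subD1set J i)).
  by case: I_side => I_side; [left | right] => b b_pos bJ bi; rewrite -II' //; apply: I_side.
Qed.

Lemma sepJC I J : sepJ A I J -> sepJ A (fun b => ~ I b) J.
Proof.
elim=> {J} [J J1 | J P P_part P2 P_sep _ IH | J i J_conn iJ _ IH I_side].
- exact: sep_S1.
- exact: sep_S2 P_part P2 P_sep IH.
- apply: (sep_S3 J_conn iJ IH).
  case: I_side => I_side; [right | left] => b b_pos bJ bi; last exact: I_side.
  by apply; apply: I_side.
Qed.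

End Separability.

Section FiniteCartan.
Variables (n : nat) (A : 'M[int]_n) (d : 'I_n -> int).
Hypothesis A_diag : forall i, A i i = 2.
Hypothesis A_offdiag : forall i j, i != j -> A i j <= 0.
Hypothesis d_gt0 : forall i, 0 < d i.
Hypothesis dA_sym : forall i j, d i * A i j = d j * A j i.
Hypothesis A_posdef : forall x : 'rV[int]_n, x != 0 ->
  0 < \sum_i \sum_j x ord0 i * d i * A i j * x ord0 j.

Lemma refl_sroot i : refl A i (sroot i) = - sroot i.
Proof. by rewrite reflE pairing_sroot A_diag; apply/rowP => j; rewrite !mxE; ring. Qed.

Lemma reflK i : involutive (refl A i).
Proof.
move=> v; rewrite [refl A i v]reflE reflD reflN reflZ refl_sroot reflE.
by apply/rowP => j; rewrite !mxE; ring.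
Qed.

Lemma rev_actK w : cancel (act A w) (act A (rev w)).
Proof. by elim: w => //= i w IH x; rewrite rev_cons act_rcons reflK IH. Qed.

Lemma act_revK w : cancel (act A (rev w)) (act A w).
Proof. by move=> x; rewrite -{1}(revK w) rev_actK. Qed.

Definition form (u v : 'rV[int]_n) : int := \sum_i u ord0 i * d i * pairing A i v.

Lemma formE u v : form u v = \sum_i \sum_j u ord0 i * d i * A i j * v ord0 j.
Proof. by apply: eq_bigr => i _; rewrite /pairing mulr_sumr; apply: eq_bigr => j _; ring. Qed.

Lemma form_sym u v : form u v = form v u.
Proof.
rewrite !formE [RHS]exchange_big; apply: eq_bigr => i _; apply: eq_bigr => j _.
transitivity (u ord0 i * (d i * A i j) * v ord0 j); first ring.
by rewrite dA_sym; ring.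
Qed.

Lemma formDl (u u' v : 'rV[int]_n) : form (u + u') v = form u v + form u' v.
Proof. by rewrite /form -big_split; apply: eq_bigr => i _; rewrite mxE !mulrDl. Qed.

Lemma formZl a (u v : 'rV[int]_n) : form (a *: u) v = a * form u v.
Proof. by rewrite /form mulr_sumr; apply: eq_bigr => i _; rewrite mxE; ring. Qed.

Lemma formNl (u v : 'rV[int]_n) : form (- u) v = - form u v.
Proof. by rewrite -scaleN1r formZl mulN1r. Qed.

Lemma formDr (u v v' : 'rV[int]_n) : form u (v + v') = form u v + form u v'.
Proof. by rewrite form_sym formDl !(form_sym _ u). Qed.

Lemma formZr a (u v : 'rV[int]_n) : form u (a *: v) = a * form u v.
Proof. by rewrite form_sym formZl form_sym. Qed.

Lemma formNr (u v : 'rV[int]_n) : form u (- v) = - form u v.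
Proof. by rewrite form_sym formNl form_sym. Qed.

Lemma form_srootl k v : form (sroot k) v = d k * pairing A k v.
Proof.
rewrite /form (bigD1 k) //= srootE eqxx mul1r big1 ?addr0 // => i /negbTE ik.
by rewrite srootE eq_sym ik !mul0r.
Qed.

Lemma form_srootr k v : form v (sroot k) = d k * pairing A k v.
Proof. by rewrite form_sym form_srootl. Qed.

Lemma form_refl k u v : form (refl A k u) (refl A k v) = form u v.
Proof.
rewrite !reflE !(formDl, formDr, formNl, formNr, formZl, formZr).
by rewrite !form_srootl !form_srootr pairing_sroot A_diag; ring.
Qed.

Lemma form_act w u v : form (act A w u) (act A w v) = form u v.
Proof. by elim: w => //= i w IH; rewrite form_refl. Qed.

Lemma form_gt0 x : x != 0 -> 0 < form x x.
Proof. by rewrite formE; apply: A_posdef. Qed.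

Lemma root_act w b : is_root A b -> is_root A (act A w b).
Proof. by case=> u [i ->]; exists (w ++ u), i; rewrite act_cat. Qed.

Lemma root_opp b : is_root A b -> is_root A (- b).
Proof. by case=> u [i ->]; exists (rcons u i), i; rewrite act_rcons refl_sroot actN. Qed.

Lemma sroot_neq0 k : sroot k != 0 :> 'rV[int]_n.
Proof. by apply/eqP => /rowP /(_ k); rewrite srootE eqxx mxE. Qed.

Lemma root_neq0 b : is_root A b -> b != 0.
Proof.
case=> u [k ->]; apply: contra_neq (sroot_neq0 k) => u_k0.
by rewrite -(rev_actK u (sroot k)) u_k0 act0.
Qed.

Lemma pos_root_not_neg b : is_root A b -> nonneg b -> ~ nonneg (- b).
Proof.
move=> b_root b_ge0 b_le0; apply/negP: (root_neq0 b_root); rewrite negbK.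
apply/eqP/rowP => j; apply/eqP; rewrite mxE eq_le b_ge0 andbT -oppr_ge0.
by have := b_le0 j; rewrite mxE.
Qed.

(* [z] is the coroot of [v] in coordinates of simple coroots. *)
Definition rootlike k (v : 'rV[int]_n) :=
  form v v = 2 * d k /\ exists z : 'rV[int]_n, forall i, d i * v ord0 i = d k * z ord0 i.

Lemma rootlike_sroot k : rootlike k (sroot k).
Proof.
split; first by rewrite form_srootl pairing_sroot A_diag mulrC.
by exists (sroot k) => i; rewrite !srootE; case: eqP => [->|]; rewrite ?mulr0.
Qed.

Lemma rootlike_opp k v : rootlike k v -> rootlike k (- v).
Proof.
case=> v_norm [z vz]; split; first by rewrite formNl formNr opprK.
by exists (- z) => i; rewrite !mxE !mulrN vz.
Qed.

Lemma rootlike_refl k j v : rootlike k v -> rootlike k (refl A j v).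
Proof.
case=> v_norm [z vz]; split; first by rewrite form_refl.
exists (z - (\sum_l A l j * z ord0 l) *: sroot j) => i.
rewrite refl_coord !mxE /=; case: eqP => [->|_]; last by rewrite vz mulr0 subr0.
rewrite mulr1 mulrBr vz /pairing !mulr_sumr mulrBr mulr_sumr; congr (_ - _).
by apply: eq_bigr => l _; rewrite mulrA dA_sym mulrAC vz; ring.
Qed.

Lemma rootlike_act w k : rootlike k (act A w (sroot k)).
Proof. by elim: w => [|j w IH]; [exact: rootlike_sroot | exact: rootlike_refl]. Qed.

(* With [p] the part of [v] off [j], [2 d_k = B(v,v) = B(p,p) + 2 (d_j v_j) (- (s_j v)_j)];
   if [p != 0] the right side exceeds [2 d_k], as [B(p,p) >= 1] and [d_j v_j] is a
   positive multiple of [d_k]. *)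
Lemma rootlike_refl_neg_support k v j : rootlike k v -> nonneg v ->
  refl A j v ord0 j < 0 -> forall i, i != j -> v ord0 i = 0.
Proof.
move=> [v_norm [z vz]] v_ge0 y_lt0 i ij; apply/eqP; rewrite eq_le v_ge0 andbT leNgt.
apply/negP => vi_gt0; move: y_lt0.
set x := v ord0 j; set p := v - x *: sroot j.
have pE l : p ord0 l = if l == j then 0 else v ord0 l.
  by rewrite !mxE /=; case: eqP => [->|_]; rewrite ?mulr1 ?subrr ?mulr0 ?subr0.
have p_gt0 : 0 < form p p.
  apply: form_gt0; apply: contraTneq vi_gt0 => /rowP /(_ i).
  by rewrite pE (negbTE ij) mxE => ->.
have pair_p : pairing A j p <= 0.
  apply: sumr_le0 => l _; rewrite pE; case: eqVneq => [_|lj]; first by rewrite mulr0.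
  by apply: mulr_le0_ge0; [apply: A_offdiag; rewrite eq_sym | apply: v_ge0].
have vE : v = p + x *: sroot j by rewrite subrK.
clearbody p.
have yE : refl A j v ord0 j = - x - pairing A j p.
  by rewrite refl_coord eqxx -/x vE pairingD pairingZ pairing_sroot A_diag; ring.
have v_norm' : form v v = form p p + 2 * x * d j * (x + pairing A j p).
  rewrite vE !(formDl, formDr, formZl, formZr) !form_srootl !form_srootr.
  by rewrite pairing_sroot A_diag; ring.
rewrite yE => y_lt0; have dj := d_gt0 j; have dk := d_gt0 k; have xz := vz j.
have zj_ge1 : 1 <= z ord0 j by nia.
nia.
Qed.

Definition coherent (v : 'rV[int]_n) := nonneg v \/ nonneg (- v).

Lemma coherent_refl_nonneg k v j : rootlike k v -> nonneg v -> coherent (refl A j v).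
Proof.
move=> v_like v_ge0; case: (lerP 0 (refl A j v ord0 j)) => [y_ge0|y_lt0].
  by left=> i; case: (eqVneq i j) => [->//|ij]; rewrite refl_coord (negbTE ij).
right=> i; rewrite mxE oppr_ge0; case: (eqVneq i j) => [->|ij]; first exact: ltW.
by rewrite refl_coord (negbTE ij) (rootlike_refl_neg_support v_like v_ge0 y_lt0 ij).
Qed.

Lemma root_coherent b : is_root A b -> coherent b.
Proof.
case=> w [k ->]; elim: w => [|j w IH] /=.
  by left=> i; rewrite srootE ler0n.
case: IH => H; first exact: coherent_refl_nonneg (rootlike_act w k) H.
have := coherent_refl_nonneg j (rootlike_opp (rootlike_act w k)) H.
by rewrite /coherent reflN opprK => -[]; [right | left].
Qed.

Lemma root_scale_sroot m j : is_root A (m *: sroot j) -> 0 < m -> m = 1.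
Proof.
case=> w [k mj] m_gt0; have := congr1 (fun v => act A (rev w) v ord0 k) mj.
rewrite /= rev_actK actZ mxE srootE eqxx; set t := _ ord0 k => mt1.
have t_gt0 : 0 < t by nia.
nia.
Qed.

Lemma refl_pos_root c j : pos_root A c -> c != sroot j -> nonneg (refl A j c).
Proof.
move=> [c_root c_ge0] c_neq; case: (root_coherent (root_act [:: j] c_root)) => //= sc_le0.
case/eqP: c_neq.
have c_off i : i != j -> c ord0 i = 0.
  by move=> ij; have := sc_le0 i; have := c_ge0 i; rewrite mxE refl_coord (negbTE ij); lia.
have cE : c = c ord0 j *: sroot j.
  apply/rowP => i; rewrite mxE srootE; case: (eqVneq j i) => [->|ji]; first by rewrite mulr1.
  by rewrite mulr0 c_off // eq_sym.
have cj_gt0 : 0 < c ord0 j.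
  rewrite lt_def c_ge0 andbT; apply: contra_neq (root_neq0 c_root) => cj0.
  by rewrite cE cj0 scale0r.
have cj1 : c ord0 j = 1 by apply: (root_scale_sroot (j := j)) cj_gt0; rewrite -cE.
by rewrite cE cj1 scale1r.
Qed.

Lemma act_conj_sroot u i k : act A u (sroot i) = sroot k ->
  forall v, act A (u ++ i :: rev u) v = refl A k v.
Proof.
move=> u_ik v; rewrite act_cat /= reflE actD actN actZ u_ik act_revK reflE.
set z := act A (rev u) v.
have dik : d i = d k.
  by have := form_act u (sroot i) (sroot i); rewrite u_ik !form_srootl !pairing_sroot !A_diag; lia.
have : d i * pairing A i z = d k * pairing A k v.
  by rewrite -form_srootl -(form_act u) u_ik act_revK form_srootl.
by rewrite dik => /mulfI -> //; rewrite gt_eqF.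
Qed.

Lemma exchange_shorter r i : ~ nonneg (act A r (sroot i)) ->
  exists2 r', same_elt A r' (rcons r i) & (size r' < size r)%N.
Proof.
elim: r => [|j r IH] /= ri_neg.
  by case: ri_neg => l; rewrite srootE ler0n.
have [ri_ge0|ri_neg'] := nonnegP (act A r (sroot i)); last first.
  by have [r' r'_eq r'_size] := IH ri_neg'; exists (j :: r') => // x /=; rewrite r'_eq.
have [ri_j|ri_j] := eqVneq (act A r (sroot i)) (sroot j); last first.
  by case: ri_neg; apply: refl_pos_root => //; split=> //; exists r, i.
exists r => // x; rewrite /= -(act_conj_sroot ri_j) act_cat /= act_rcons.
by rewrite rev_actK reflK.
Qed.

Lemma longest_neg_sroot J w i : is_longest A J w -> i \in J -> nonneg (- act A w (sroot i)).
Proof.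
move=> [wJ w_max] iJ; have wi_root : is_root A (act A w (sroot i)) by exists w, i.
case: (root_coherent wi_root) => // wi_ge0; exfalso.
have wi_le_w : length_le A (rcons w i) w.
  by apply: w_max; rewrite /in_parabolic all_rcons; apply/andP.
apply: (@no_descent _ size (fun v => same_elt A v w) _ w (fun x => erefl)) => v v_w.
have [u u_wi u_size] := wi_le_w v v_w.
have ui_neg : ~ nonneg (act A u (sroot i)).
  by rewrite u_wi act_rcons refl_sroot actN; exact: pos_root_not_neg.
have [r r_ui r_size] := exchange_shorter ui_neg.
exists r; last exact: leq_trans r_size u_size.
by move=> x; rewrite r_ui !act_rcons u_wi act_rcons reflK.
Qed.

Lemma longest_neg_span J w c : is_longest A J w -> in_span J c -> nonneg c ->
  nonneg (- act A w c).
Proof.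
move=> w_longest cJ c_ge0 j; rewrite (in_span_sroot_sum cJ) act_sum -sumrN summxE.
apply: sumr_ge0 => i iJ; rewrite actZ -scalerN mxE.
exact: mulr_ge0 (c_ge0 i) (longest_neg_sroot w_longest iJ j).
Qed.

Lemma inv_set_longest_catC J w u b : is_longest A J w -> all (mem J) u ->
  pos_root A b -> in_span J b -> (inv_set A (w ++ u) b <-> ~ inv_set A u b).
Proof.
move=> w_longest uJ b_pos bJ; have ub_root := root_act u b_pos.1.
have ubJ : in_span J (act A u b) by apply: act_in_span.
rewrite /inv_set act_cat; split.
  move=> [_ [_ wub_le0]] [_ [_ ub_le0]].
  have := longest_neg_span w_longest (in_spanN ubJ) ub_le0.
  rewrite actN opprK => wub_ge0.
  exact: pos_root_not_neg (root_act w ub_root) wub_ge0 wub_le0.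
move=> ub_not_inv; split=> //; split; first exact/root_opp/root_act.
case: (root_coherent ub_root) => [ub_ge0|ub_le0].
  exact: longest_neg_span w_longest ubJ ub_ge0.
by case: ub_not_inv; split=> //; split=> //; apply: root_opp.
Qed.

Lemma cartan_eq0_sym x y : (A x y == 0) = (A y x == 0).
Proof.
by rewrite -[LHS]orFb -(gt_eqF (d_gt0 x)) -mulf_eq0 dA_sym mulf_eq0 (gt_eqF (d_gt0 y)).
Qed.

Lemma dynkin_edge_cartan x y : dynkin_edge A x y -> A x y != 0.
Proof.
apply: contraPneq => Axy; rewrite /dynkin_edge => -[] v.
have Ayx : A y x = 0 by apply/eqP; rewrite -cartan_eq0_sym Axy.
rewrite /= !reflE !(pairingD, pairingN, pairingZ) !pairing_sroot Axy Ayx.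
by apply/rowP => j; rewrite !mxE; ring.
Qed.

Lemma cartan_dynkin_edge x y : x != y -> A x y != 0 -> dynkin_edge A x y.
Proof.
move=> xy Axy xy_comm; have := congr1 (fun v : 'rV[int]_n => v ord0 x) (xy_comm (sroot y)).
rewrite /= !reflE !(pairingD, pairingN, pairingZ) !pairing_sroot A_diag !mxE /=.
by rewrite eqxx (negbTE xy) /=; move: Axy; lia.
Qed.

Section Components.
Variable D : {set 'I_n}.

Definition cartan_rel : rel 'I_n := fun x y => [&& x \in D, y \in D & A x y != 0].

Lemma cartan_rel_sym : symmetric cartan_rel.
Proof. by move=> x y; rewrite /cartan_rel cartan_eq0_sym andbCA. Qed.

Definition components := equivalence_partition (connect cartan_rel) D.

Lemma components_partition : partition components D.
Proof.
apply: equivalence_partitionP => x y z _ _ _; split; first exact: connect0.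
by move=> xy; apply: same_connect => //; apply: sym_connect_sym cartan_rel_sym.
Qed.

Lemma components_subset C : C \in components -> C \subset D.
Proof. exact: partition_subset components_partition. Qed.

Lemma componentsP C : C \in components ->
  exists2 x, x \in D & C = [set y in D | connect cartan_rel x y].
Proof. by case/imsetP => x xD ->; exists x. Qed.

Lemma component_closed C x y :
  C \in components -> x \in C -> y \in D -> A x y != 0 -> y \in C.
Proof.
case/componentsP => z zD ->; rewrite !inE => /andP [xD zx] yD Axy.
by rewrite yD (connect_trans zx) // connect1 //= /cartan_rel xD yD.
Qed.

Lemma components_no_edge C1 C2 x y : C1 \in components -> C2 \in components ->
  C1 != C2 -> x \in C1 -> y \in C2 -> ~ dynkin_edge A x y.
Proof.
move=> C1_comp C2_comp C12 xC1 yC2 /dynkin_edge_cartan Axy.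
have yC1 := component_closed C1_comp xC1 (subsetP (components_subset C2_comp) y yC2) Axy.
case/and3P: components_partition => _ /trivIsetP triv _.
by have /disjointFr/(_ yC1) := triv _ _ C1_comp C2_comp C12; rewrite yC2.
Qed.

Lemma component_connected C : C \in components -> connected A C.
Proof.
move=> C_comp; have [x xD CE] := componentsP C_comp.
have xC : x \in C by rewrite CE inE xD connect0.
split; first by exists x.
move=> S SC [y yS] S_closed; apply/eqP; rewrite eqEsubset SC /=; apply/subsetP => z zC.
have : connect cartan_rel y z.
  move: (subsetP SC y yS) zC; rewrite CE !inE => /andP [_ xy] /andP [_ xz].
  by apply: connect_trans xz; rewrite (sym_connect_sym cartan_rel_sym).
case/connectP => p yp ->; elim: p y yS yp => //= t p IH y yS /andP [yt tp].
move: yt; rewrite /cartan_rel => /and3P [_ tD Ayt].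
have yC := subsetP SC y yS; apply: IH tp.
have [<-//|yt] := eqVneq y t.
exact: S_closed yS (component_closed C_comp yC tD Ayt) (cartan_dynkin_edge yt Ayt).
Qed.

Lemma connected_component_or_orthogonal C (K : {set 'I_n}) :
  C \in components -> K \subset D -> connected A K ->
  K \subset C \/ (forall j l, j \in K -> l \in C -> A j l = 0).
Proof.
move=> C_comp KD [_ K_conn].
have [/existsP [j /existsP [l /and3P [jK lC Ajl]]]|no_link] :=
  boolP [exists j, exists l, [&& j \in K, l \in C & A j l != 0]]; last first.
  right=> j l jK lC; apply/eqP; apply: contraNT no_link => Ajl.
  by apply/existsP; exists j; apply/existsP; exists l; rewrite jK lC.
left; suff <- : K :&: C = K by apply: subsetIr.
apply: K_conn; first exact: subsetIl.
  exists j; rewrite inE jK (component_closed C_comp lC) ?(subsetP KD) //.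
  by rewrite cartan_eq0_sym.
move=> x y; rewrite !inE => /andP [xK xC] yK /dynkin_edge_cartan Axy.
by rewrite yK (component_closed C_comp xC (subsetP KD y yK) Axy).
Qed.

End Components.

Section NestedSet.
Variables (N : {set {set 'I_n}}) (s : seq {set 'I_n}) (w0 : {set 'I_n} -> seq 'I_n).
Hypothesis N_nested : nested A N.
Hypothesis s_monotonic : monotonic_order N s.
Hypothesis w0_longest : forall J, J \in N -> is_longest A J (w0 J).

Lemma mem_s K : (K \in s) = (K \in N).
Proof. by rewrite (perm_mem s_monotonic.1) mem_enum. Qed.

Lemma mem_w0 K j : K \in N -> j \in w0 K -> j \in K.
Proof. by move=> /w0_longest [/allP w0K _] /w0K. Qed.

Lemma mem_flatten_w0 (t : seq {set 'I_n}) j :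
  {subset t <= N} -> j \in flatten [seq w0 K | K <- t] -> exists2 K, K \in t & j \in K.
Proof.
by move=> tN /flattenP [w /mapP [K Kt ->] jw]; exists K; last exact: mem_w0 (tN K Kt) jw.
Qed.

Definition wsub (J : {set 'I_n}) :=
  flatten [seq w0 K | K <- [seq K : {set 'I_n} <- s | K \subset J]].

Definition wproper (J : {set 'I_n}) :=
  flatten [seq w0 K | K <- [seq K : {set 'I_n} <- s | K \proper J]].

Lemma wproper_letter J j : j \in wproper J -> exists2 K, K \in N & K \proper J /\ j \in K.
Proof.
have sN : {subset [seq K : {set 'I_n} <- s | K \proper J] <= N}.
  by move=> K; rewrite mem_filter mem_s => /andP [].
by case/(mem_flatten_w0 sN) => K; rewrite mem_filter mem_s => /andP [KJ KN] jK; exists K.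
Qed.

Lemma wsub_notin J : J \notin N -> wsub J = wproper J.
Proof.
move=> JN; congr (flatten (map _ _)); apply: eq_in_filter => K Ks.
have KJ : K != J by apply: contraNneq JN => <-; rewrite -mem_s.
by rewrite properEneq KJ.
Qed.

Lemma wsub_in J : J \in N -> wsub J = w0 J ++ wproper J.
Proof.
move=> JN.
have J_first : {in s, forall K : {set 'I_n}, K \proper J -> index J s < index K s}%N.
  by move=> K; rewrite mem_s; apply: s_monotonic.2.
rewrite /wsub /wproper filter_subset_head ?mem_s //.
by rewrite (perm_uniq s_monotonic.1) enum_uniq.
Qed.

Lemma sep_wsub J : sepJ A (inv_set A (wproper J)) J -> sepJ A (inv_set A (wsub J)) J.
Proof.
move=> sep_J; have [JN|JN] := boolP (J \in N); last by rewrite wsub_notin.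
rewrite wsub_in //; apply: eq_sepJ (sepJC sep_J) _ => b b_pos bJ.
rewrite (inv_set_longest_catC (w0_longest JN)) //.
by apply/allP => j /wproper_letter [K _ [KJ jK]]; apply: subsetP (proper_sub KJ) j jK.
Qed.

Definition uncovered (J : {set 'I_n}) (i : 'I_n) :=
  forall K, K \in N -> K \proper J -> i \notin K.

Definition proper_member (J : {set 'I_n}) : pred {set 'I_n} :=
  fun K => (K \in N) && (K \proper J).

Definition maximal_proper (J : {set 'I_n}) : {set {set 'I_n}} :=
  [set K | maxset (proper_member J) K].

Lemma maximal_proper_disjoint J K1 K2 :
  K1 \in maximal_proper J -> K2 \in maximal_proper J -> K1 != K2 -> [disjoint K1 & K2].
Proof.
rewrite !inE => /maxsetP [/andP [K1N K1J] K1_max] /maxsetP [/andP [K2N K2J] K2_max] K12.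
have [_ N_laminar _] := N_nested; case/or3P: (N_laminar _ _ K1N K2N) => // [K1K2|K2K1].
  by case/eqP: K12; apply/esym/K1_max; rewrite // /proper_member K2N.
by case/eqP: K12; apply/K2_max; rewrite // /proper_member K1N.
Qed.

Lemma bigcup_maximal_proper_neq J : connected A J -> \bigcup_(K in maximal_proper J) K != J.
Proof.
move=> J_conn; set M := maximal_proper J.
have [M_ge2|M_le1] := leqP 2 #|M|.
  have MN : M \subset N by apply/subsetP => K; rewrite inE => /maxsetP [/andP []].
  have [_ _ N_sep] := N_nested; apply/eqP => MJ.
  by apply: (N_sep M MN M_ge2 (@maximal_proper_disjoint J)); rewrite MJ.
case: (set_0Vmem M) => [->|[K KM]].
  by rewrite big_set0; apply/eqP => J0; have [i] := J_conn.1; rewrite -J0 inE.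
have -> : M = [set K] by apply/eqP; rewrite eq_sym eqEcard sub1set KM cards1.
move: KM; rewrite big_set1 inE => /maxsetP [/andP [_]].
by rewrite properEneq => /andP [].
Qed.

Lemma uncovered_vertex J : connected A J -> exists2 i, i \in J & uncovered J i.
Proof.
move=> J_conn; set M := maximal_proper J.
have MJ : \bigcup_(K in M) K \proper J.
  rewrite properEneq bigcup_maximal_proper_neq //=; apply/bigcupsP => K.
  by rewrite inE => /maxsetP [/andP [_ /proper_sub]].
have [_ [i iJ iM]] := properP MJ.
exists i => // K KN KJ; apply: contra iM => iK.
have [K' K'max KK'] : {K' | maxset (proper_member J) K' & K \subset K'}.
  by apply: maxset_exists; rewrite /proper_member KN.
by apply/bigcupP; exists K'; [rewrite inE | apply: subsetP KK' i iK].
Qed.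

Lemma act_flatten_w0_filter (C : {set 'I_n}) (t : seq {set 'I_n}) b :
  {subset t <= N} ->
  (forall K, K \in t -> ~~ (K \subset C) -> forall j l, j \in K -> l \in C -> A j l = 0) ->
  in_span C b ->
  act A (flatten [seq w0 K | K <- t]) b =
  act A (flatten [seq w0 K | K <- [seq K : {set 'I_n} <- t | K \subset C]]) b.
Proof.
elim: t => //= K t IH tN t_orth bC.
have tN' : {subset t <= N} by move=> K' K't; apply: tN; rewrite inE K't orbT.
rewrite act_cat IH //; last by move=> K' K't; apply: t_orth; rewrite inE K't orbT.
case: ifP => KC; first by rewrite act_cat.
apply: act_orthogonal_id.
  move=> j l jK; have KN := tN K (mem_head _ _).
  exact: t_orth (mem_head _ _) (negbT KC) _ _ (mem_w0 KN jK).
have tCN : {subset [seq K : {set 'I_n} <- t | K \subset C] <= N}.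
  by move=> K'; rewrite mem_filter => /andP [_ /tN'].
apply: act_in_span bC; apply/allP => j /(mem_flatten_w0 tCN) [K'].
by rewrite mem_filter => /andP [K'C _] /(subsetP K'C).
Qed.

Lemma wproper_on_component (J : {set 'I_n}) i C b : i \in J -> uncovered J i ->
  C \in components (J :\ i) -> in_span C b -> act A (wproper J) b = act A (wsub C) b.
Proof.
move=> iJ i_unc C_comp bC; have [N_conn _ _] := N_nested.
have CJ : C \proper J := sub_proper_trans (components_subset C_comp) (properD1 iJ).
rewrite /wproper (act_flatten_w0_filter (C := C)) //.
- rewrite -filter_predI; congr (act A (flatten (map _ _)) b); apply: eq_filter => K /=.
  by case: (boolP (K \subset C)) => //= KC; apply: sub_proper_trans KC CJ.
- by move=> K; rewrite mem_filter mem_s => /andP [].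
move=> K; rewrite mem_filter mem_s => /andP [KJ KN] KC.
have KJi : K \subset J :\ i by rewrite subsetD1 (proper_sub KJ) i_unc.
by case: (connected_component_or_orthogonal C_comp KJi (N_conn K KN)) => // /(negP KC).
Qed.

Lemma sep_wproper_component (J : {set 'I_n}) i C :
  i \in J -> uncovered J i -> C \in components (J :\ i) ->
  sepJ A (inv_set A (wproper C)) C -> sepJ A (inv_set A (wproper J)) C.
Proof.
move=> iJ i_unc C_comp sepC; apply: eq_sepJ (sep_wsub sepC) _ => b _ bC.
by rewrite /inv_set (wproper_on_component iJ i_unc C_comp bC).
Qed.

Lemma wproper_not_inv J i b : uncovered J i -> root_le (sroot i) b ->
  ~ inv_set A (wproper J) b.
Proof.
move=> i_unc ib [_ [_ wb_le0]]; have := wb_le0 i; have := ib i.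
rewrite !mxE !eqxx /= act_coord_notin; first lia.
by apply/negP => /wproper_letter [K KN [KJ iK]]; move: (i_unc K KN KJ); rewrite iK.
Qed.

Lemma sep_wproper J : connected A J -> sepJ A (inv_set A (wproper J)) J.
Proof.
elim: {J}#|J|.+1 {-2}J (ltnSn #|J|) => // m IH J; rewrite ltnS => J_m J_conn.
have [J1|J_ne1] := eqVneq #|J| 1%N; first exact: sep_S1.
have [i iJ i_unc] := uncovered_vertex J_conn.
apply: (sep_S3 J_conn iJ); last by right=> b _ _; apply: wproper_not_inv.
have sep_comp C : C \in components (J :\ i) -> sepJ A (inv_set A (wproper J)) C.
  move=> C_comp; apply: (sep_wproper_component iJ i_unc C_comp).
  apply: IH (component_connected C_comp); apply: leq_trans J_m.
  exact/proper_card/(sub_proper_trans (components_subset C_comp) (properD1 iJ)).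
have [comp_ge2|comp_le1] := leqP 2 #|components (J :\ i)|.
  exact: sep_S2 (components_partition _) comp_ge2 (@components_no_edge _) sep_comp.
have [j jJi] : exists j, j \in J :\ i.
  apply/set0Pn; rewrite -card_gt0; have J_gt0 : (0 < #|J|)%N by apply/card_gt0P; exists i.
  by move: J_ne1 (cardsD1 i J); rewrite iJ; lia.
exact/sep_comp/(partition_card_le1 (components_partition _) _ jJi).
Qed.

Lemma wsub_setT : wsub setT = flatten [seq w0 J | J <- s].
Proof. by rewrite /wsub (eq_filter (a2 := predT)) ?filter_predT // => K; rewrite subsetT. Qed.

End NestedSet.

End FiniteCartan.

Theorem lemma5p6 (n : nat) (A : 'M[int]_n) (N : {set {set 'I_n}})
  (s : seq {set 'I_n}) (w0 : {set 'I_n} -> seq 'I_n) :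
  cartan_finite A ->
  connected A setT ->
  nested A N ->
  monotonic_order N s ->
  (forall J, J \in N -> is_longest A J (w0 J)) ->
  separable A (flatten [seq w0 J | J <- s]).
Proof.
move=> [A_diag A_offdiag _ [d [d_gt0 dA_sym A_posdef]]] A_conn N_nested s_mono w0_longest.
rewrite /separable -wsub_setT.
apply: (sep_wsub A_diag A_offdiag d_gt0 dA_sym A_posdef s_mono w0_longest).
exact: (sep_wproper A_diag A_offdiag d_gt0 dA_sym A_posdef N_nested s_mono w0_longest A_conn).
Qed.
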